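(* Let $x<y$ be real numbers and let $\alpha\in(0,1)$. Let $f:[x,y]\to\mathbb{R}$ be a convex function and let $F:[x,y]\to\mathbb{R}$ be such that $F'=f$. Define $$S^1_\alpha f(x,y):=\frac{-\frac{\alpha}{1-\alpha}F(x)+\frac{2\alpha-1}{\alpha(1-\alpha)}F(\alpha x+(1-\alpha)y)+\frac{1-\alpha}{\alpha}F(y)}{y-x}.$$ Then $$f(\alpha x+(1-\alpha)y)\leq S^1_\alpha f(x,y)\leq\alpha f(x)+(1-\alpha)f(y).$$ *)

From Stdlib Require Import Reals Lra.
Open Scope R_scope.

Definition convex_on (x y : R) (f : R -> R) : Prop :=
  forall a b t, x <= a <= y -> x <= b <= y -> 0 <= t <= 1 ->
    f (t * a + (1 - t) * b) <= t * f a + (1 - t) * f b.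

(* F' = f on the closed interval [x,y]: at every point t of [x,y], the
   difference quotient of F, taken within [x,y] (one-sided at endpoints),
   tends to f t. *)
Definition deriv_on (x y : R) (F f : R -> R) : Prop :=
  forall t, x <= t <= y ->
    limit1_in (fun s => (F s - F t) / (s - t))
              (fun s => x <= s <= y /\ s <> t) (f t) t.

Definition S1 (alpha x y : R) (F : R -> R) : R :=
  (- (alpha / (1 - alpha)) * F x
   + (2 * alpha - 1) / (alpha * (1 - alpha)) * F (alpha * x + (1 - alpha) * y)
   + (1 - alpha) / alpha * F y) / (y - x).

From Stdlib Require Import Reals Lra.
From Coquelicot Require Import Coquelicot.
Open Scope R_scope.

(* Put z = alpha x + (1 - alpha) y and h = y - x.  Clearing the denominator,
   S1 alpha x y F * alpha (1 - alpha) h is the combination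
   alpha^2 (F z - F x) + (1 - alpha)^2 (F y - F z) of the increments of F over
   [x, z] and [z, y].  Bounding each increment by the trapezoid rule and then
   using convexity at z gives the upper estimate.  For the lower one, move from
   z towards x and towards y simultaneously, at speeds (1 - alpha) h and
   alpha h: the two moving points always have z as their alpha-barycentre, so
   by convexity the weighted combination of their increments grows at least as
   fast as alpha (1 - alpha) h f z. *)

Lemma nondecreasing_of_derive_nonneg (K dK : R -> R) (a b : R) :
  a <= b ->
  (forall u, a < u < b -> is_derive K u (dK u)) ->
  (forall u, a <= u <= b -> continuous K u) ->
  (forall u, a <= u <= b -> 0 <= dK u) ->
  K a <= K b.
Proof.
  intros Hab HK HKc HdK.
  assert (Hmvt := MVT_gen K a b dK). cbv zeta in Hmvt.
  rewrite Rmin_left, Rmax_right in Hmvt by lra.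
  destruct Hmvt as [c [Hc HKab]].
  - exact HK.
  - intros u Hu. apply continuity_pt_filterlim, HKc, Hu.
  - assert (0 <= dK c * (b - a)) by (apply Rmult_le_pos; [apply HdK, Hc | lra]).
    lra.
Qed.

Section Primitive.

Variables (x y : R) (f F : R -> R).
Hypothesis Hxy : x < y.
Hypothesis HF : deriv_on x y F f.

(* [deriv_on] says nothing about F outside [x, y]; freezing F there yields a
   function that is continuous on R and differentiable on (x, y), to which the
   mean value theorem applies. *)
Definition clamp (t : R) : R := Rmax x (Rmin y t).
Definition F_ext (t : R) : R := F (clamp t).

Lemma clamp_mem t : x <= clamp t <= y.
Proof. unfold clamp, Rmax, Rmin; repeat destruct Rle_dec; lra. Qed.

Lemma clamp_id t : x <= t <= y -> clamp t = t.
Proof. unfold clamp, Rmax, Rmin; repeat destruct Rle_dec; lra. Qed.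

Lemma clamp_dist_le s t : Rabs (clamp s - clamp t) <= Rabs (s - t).
Proof. unfold clamp, Rmax, Rmin; repeat destruct Rle_dec; split_Rabs; lra. Qed.

Lemma F_continuous_within t :
  x <= t <= y -> limit1_in F (fun s => x <= s <= y) (F t) t.
Proof.
  intros Ht.
  assert (Hdist : limit1_in (fun s => s - t) (fun s => x <= s <= y /\ s <> t) 0 t).
  { intros eps Heps. exists eps. split; [lra |].
    intros s [_ Hs]. simpl in *. unfold R_dist in *. rewrite Rminus_0_r. exact Hs. }
  intros eps Heps.
  destruct (limit_mul _ _ _ _ _ _ (HF t Ht) Hdist eps Heps) as [d [Hd Hlim]].
  exists d. split; [exact Hd |].
  intros s [Hs Hst]. simpl in *. unfold R_dist in *.
  destruct (Req_dec s t) as [-> | Hne].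
  - rewrite Rminus_diag, Rabs_R0. lra.
  - specialize (Hlim s (conj (conj Hs Hne) Hst)).
    replace ((F s - F t) / (s - t) * (s - t) - f t * 0) with (F s - F t) in Hlim
      by (field; lra).
    exact Hlim.
Qed.

Lemma F_ext_continuous t : continuous F_ext t.
Proof.
  apply continuity_pt_filterlim. intros eps Heps.
  destruct (F_continuous_within (clamp t) (clamp_mem t) eps Heps) as [d [Hd Hlim]].
  exists d. split; [exact Hd |].
  intros s [_ Hs]. simpl in *. unfold R_dist in *.
  apply Hlim. split; [apply clamp_mem |].
  pose proof (clamp_dist_le s t). lra.
Qed.

Lemma F_ext_derive t : x < t < y -> is_derive F_ext t (f t).
Proof.
  intros Ht. apply is_derive_Reals, (derivable_pt_lim_D_in F_ext (fun _ => f t)).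
  intros eps Heps.
  destruct (HF t ltac:(lra) eps Heps) as [d [Hd Hlim]].
  exists (Rmin d (Rmin (t - x) (y - t))).
  split; [repeat apply Rmin_pos; lra |].
  intros s [[_ Hts] Hs]. simpl in *. unfold R_dist in *.
  pose proof (Rmin_l d (Rmin (t - x) (y - t))).
  pose proof (Rmin_r d (Rmin (t - x) (y - t))).
  pose proof (Rmin_l (t - x) (y - t)). pose proof (Rmin_r (t - x) (y - t)).
  assert (Hsxy : x < s < y) by (split_Rabs; lra).
  unfold F_ext. rewrite !clamp_id by lra.
  apply Hlim. split; [split; lra | lra].
Qed.

Lemma seg_mem a b u :
  x <= a <= y -> x <= b <= y -> 0 <= u <= 1 -> x <= a + u * (b - a) <= y.
Proof. intros Ha Hb Hu. split; nra. Qed.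

Lemma seg_interior a b u :
  x <= a <= y -> x <= b <= y -> a <> b -> 0 < u < 1 -> x < a + u * (b - a) < y.
Proof.
  intros Ha Hb Hab Hu.
  destruct (Rlt_or_le a b); [| assert (b < a) by lra]; split; nra.
Qed.

Lemma F_ext_seg_continuous a b u :
  continuous (fun u => F_ext (a + u * (b - a))) u.
Proof.
  apply (continuous_comp (fun u => a + u * (b - a)) F_ext);
    [| exact (F_ext_continuous (a + u * (b - a)))].
  apply (ex_derive_continuous (fun u => a + u * (b - a))). auto_derive. exact I.
Qed.

Lemma F_ext_seg_derive a b u :
  x < a + u * (b - a) < y ->
  is_derive (fun u => F_ext (a + u * (b - a))) u ((b - a) * f (a + u * (b - a))).
Proof.
  intros Hu.
  assert (Hseg : is_derive (fun u => a + u * (b - a)) u (b - a)).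
  { auto_derive; [exact I | ring]. }
  exact (is_derive_comp F_ext _ u _ _ (F_ext_derive _ Hu) Hseg).
Qed.

Hypothesis Hf : convex_on x y f.

Lemma trapezoid_upper_bound a b :
  x <= a -> a < b -> b <= y -> F b - F a <= (b - a) * (f a + f b) / 2.
Proof.
  intros Ha Hab Hb.
  set (K := fun u => (b - a) * (u * f a + u ^ 2 / 2 * (f b - f a))
                     - F_ext (a + u * (b - a))).
  set (dK := fun u => (b - a) * (f a + u * (f b - f a))
                      - (b - a) * f (a + u * (b - a))).
  assert (HK01 : K 0 <= K 1).
  { apply (nondecreasing_of_derive_nonneg K dK); [lra | | |].
    - intros u Hu. apply (is_derive_minus _ (fun u => F_ext (a + u * (b - a)))).
      + auto_derive; [exact I | field].
      + apply F_ext_seg_derive, seg_interior; lra.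
    - intros u _. apply (continuous_minus _ (fun u => F_ext (a + u * (b - a)))).
      + apply ex_derive_continuous. auto_derive. exact I.
      + apply F_ext_seg_continuous.
    - intros u Hu. unfold dK.
      assert (Hc := Hf a b (1 - u) ltac:(lra) ltac:(lra) ltac:(lra)).
      replace ((1 - u) * a + (1 - (1 - u)) * b) with (a + u * (b - a)) in Hc by ring.
      nra. }
  unfold K, F_ext in HK01. rewrite !clamp_id in HK01 by lra.
  replace (a + 0 * (b - a)) with a in HK01 by ring.
  replace (a + 1 * (b - a)) with b in HK01 by ring.
  lra.
Qed.

Lemma weighted_midpoint_lower_bound alpha :
  0 < alpha < 1 ->
  let z := alpha * x + (1 - alpha) * y in
  alpha * (1 - alpha) * (y - x) * f z
  <= alpha ^ 2 * (F z - F x) + (1 - alpha) ^ 2 * (F y - F z).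
Proof.
  intros Hal z.
  assert (Hz : x < z < y) by (unfold z; split; nra).
  set (c := alpha * (1 - alpha) * (y - x) * f z).
  set (Gx := fun u => F_ext (z + u * (x - z))).
  set (Gy := fun u => F_ext (z + u * (y - z))).
  set (K := fun u => (1 - alpha) ^ 2 * Gy u - alpha ^ 2 * Gx u - c * u).
  set (dK := fun u => (1 - alpha) ^ 2 * ((y - z) * f (z + u * (y - z)))
                      - alpha ^ 2 * ((x - z) * f (z + u * (x - z))) - c).
  assert (HK01 : K 0 <= K 1).
  { apply (nondecreasing_of_derive_nonneg K dK); [lra | | |].
    - intros u Hu.
      apply (is_derive_minus (fun u => (1 - alpha) ^ 2 * Gy u - alpha ^ 2 * Gx u)
                             (fun u => c * u));
        [apply (is_derive_minus (fun u => (1 - alpha) ^ 2 * Gy u)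
                                (fun u => alpha ^ 2 * Gx u)) |].
      + apply is_derive_scal, F_ext_seg_derive, seg_interior; lra.
      + apply is_derive_scal, F_ext_seg_derive, seg_interior; lra.
      + auto_derive; [exact I | ring].
    - intros u _.
      apply (continuous_minus (fun u => (1 - alpha) ^ 2 * Gy u - alpha ^ 2 * Gx u)
                              (fun u => c * u));
        [apply (continuous_minus (fun u => (1 - alpha) ^ 2 * Gy u)
                                 (fun u => alpha ^ 2 * Gx u)) |].
      + apply (continuous_scal_r _ Gy), F_ext_seg_continuous.
      + apply (continuous_scal_r _ Gx), F_ext_seg_continuous.
      + apply (ex_derive_continuous (fun u => c * u)). auto_derive. exact I.
    - intros u Hu.
      assert (Hc := Hf (z + u * (x - z)) (z + u * (y - z)) alpha
                      (seg_mem z x u ltac:(lra) ltac:(lra) Hu)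
                      (seg_mem z y u ltac:(lra) ltac:(lra) Hu) ltac:(lra)).
      replace (alpha * (z + u * (x - z)) + (1 - alpha) * (z + u * (y - z))) with z
        in Hc by (unfold z; ring).
      assert (Hk : 0 < alpha * (1 - alpha) * (y - x))
        by (apply Rmult_lt_0_compat; nra).
      unfold dK, c.
      set (p := z + u * (x - z)) in *. set (q := z + u * (y - z)) in *.
      replace ((1 - alpha) ^ 2 * ((y - z) * f q) - alpha ^ 2 * ((x - z) * f p)
               - alpha * (1 - alpha) * (y - x) * f z)
        with (alpha * (1 - alpha) * (y - x) * (alpha * f p + (1 - alpha) * f q - f z))
        by (unfold z; ring).
      apply Rmult_le_pos; lra. }
  unfold K, Gx, Gy, F_ext in HK01. rewrite !clamp_id in HK01 by lra.
  replace (z + 0 * (y - z)) with z in HK01 by ring.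
  replace (z + 0 * (x - z)) with z in HK01 by ring.
  replace (z + 1 * (y - z)) with y in HK01 by ring.
  replace (z + 1 * (x - z)) with x in HK01 by ring.
  unfold c in HK01 |- *. lra.
Qed.

End Primitive.

Lemma S1_mul_eq alpha x y F :
  x < y -> 0 < alpha < 1 ->
  let z := alpha * x + (1 - alpha) * y in
  S1 alpha x y F * (alpha * (1 - alpha) * (y - x))
  = alpha ^ 2 * (F z - F x) + (1 - alpha) ^ 2 * (F y - F z).
Proof. intros Hxy Hal z. unfold S1, z. field. lra. Qed.

Theorem proposition2 (x y alpha : R) (f F : R -> R) :
  x < y -> 0 < alpha < 1 ->
  convex_on x y f -> deriv_on x y F f ->
  f (alpha * x + (1 - alpha) * y) <= S1 alpha x y F /\
  S1 alpha x y F <= alpha * f x + (1 - alpha) * f y.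
Proof.
  intros Hxy Hal Hf HF.
  assert (HS := S1_mul_eq alpha x y F Hxy Hal).
  assert (Hlow := weighted_midpoint_lower_bound x y f F Hxy HF Hf alpha Hal).
  cbv zeta in HS, Hlow.
  set (z := alpha * x + (1 - alpha) * y) in HS, Hlow |- *.
  assert (Hz : x < z < y) by (unfold z; split; nra).
  assert (Hk : 0 < alpha * (1 - alpha) * (y - x)) by (apply Rmult_lt_0_compat; nra).
  split; apply Rmult_le_reg_r with (alpha * (1 - alpha) * (y - x)); try exact Hk;
    rewrite HS.
  - rewrite Rmult_comm. exact Hlow.
  - assert (Hxz := trapezoid_upper_bound x y f F Hxy HF Hf x z ltac:(lra) ltac:(lra) ltac:(lra)).
    assert (Hzy := trapezoid_upper_bound x y f F Hxy HF Hf z y ltac:(lra) ltac:(lra) ltac:(lra)).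
    assert (Hfz := Hf x y alpha ltac:(lra) ltac:(lra) ltac:(lra)). fold z in Hfz.
    replace (z - x) with ((1 - alpha) * (y - x)) in Hxz by (unfold z; ring).
    replace (y - z) with (alpha * (y - x)) in Hzy by (unfold z; ring).
    apply Rmult_le_compat_l with (r := alpha ^ 2) in Hxz; [| nra].
    apply Rmult_le_compat_l with (r := (1 - alpha) ^ 2) in Hzy; [| nra].
    apply Rmult_le_compat_l with (r := alpha * (1 - alpha) * (y - x) / 2) in Hfz; [| lra].
    lra.
Qed.
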